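(* For every closed subset $\mathtt{S}$ of $\mathbf{N}^{+}\times\mathbf{N}^{-}$, if $\mathtt{S}\setminus\big((\{1\}\times\mathbf{N}^{-})\cup(\mathbf{N}^{+}\times\{-1,0,1\})\big)$ is infinite, then either $\{2\}\times\mathbf{N}^{-}\subseteq\mathtt{S}$ or $\mathbf{N}^{+}\times\{2\}\subseteq\mathtt{S}$.
   Context: $\mathbb{N}=\{0,1,2,\dots\}$, $\mathbf{N}^{+}=\mathbb{N}\setminus\{0\}$, $\mathbf{N}^{-}=\mathbb{N}\cup\{-1\}$. On $\mathbf{N}^{+}\times\mathbf{N}^{-}$, $(m,n)\ll(m',n')$ iff $m\le m'$ and $n\le n'$. For $(m,n)\in\mathbf{N}^{+}\times\mathbf{N}^{-}$, $\pi(m,n)=\{(m',n')\in\mathbf{N}^{+}\times\mathbf{N}^{-}:(m',n')\ll(m,n)\}$. A subset $\mathtt{S}\subseteq\mathbf{N}^{+}\times\mathbf{N}^{-}$ is closed if $(m,n)\in\mathtt{S}$ implies $\pi(m,n)\subseteq\mathtt{S}$. *)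

From Stdlib Require Import ZArith List.
Open Scope Z_scope.

(* Points of N^+ x N^- are encoded as pairs of integers (m, n) with
   m >= 1 and n >= -1. *)
Definition NplusNminus (p : Z * Z) : Prop := 1 <= fst p /\ -1 <= snd p.

Definition ll (p q : Z * Z) : Prop := fst p <= fst q /\ snd p <= snd q.

Definition pi_set (p : Z * Z) (q : Z * Z) : Prop := NplusNminus q /\ ll q p.

Definition closed_set (S : Z * Z -> Prop) : Prop :=
  forall p, S p -> forall q, pi_set p q -> S q.

Definition infinite_set (A : Z * Z -> Prop) : Prop :=
  ~ exists l : list (Z * Z), forall p, A p -> In p l.

Definition excluded (p : Z * Z) : Prop :=
  (fst p = 1 /\ -1 <= snd p) \/ (1 <= fst p /\ -1 <= snd p <= 1).

(* If (2, b) and (a, 2) are both missing from the closed set S, closedness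
   forces every point (m, n) of S with m, n >= 2 to satisfy m < a and n < b.
   The points of S outside the excluded region are exactly those with
   m, n >= 2, so they lie in a finite box. *)

From Stdlib Require Import ZArith List Lia Classical.
Open Scope Z_scope.

Definition Z_range (a : Z) : list Z := map Z.of_nat (seq 0 (Z.to_nat a)).

Lemma in_Z_range (a x : Z) : 0 <= x < a -> In x (Z_range a).
Proof.
  intros Hx; apply in_map_iff; exists (Z.to_nat x); split.
  - lia.
  - apply in_seq; lia.
Qed.

Lemma bounded_not_infinite (A : Z * Z -> Prop) (a b : Z) :
  (forall m n, A (m, n) -> 0 <= m < a /\ 0 <= n < b) -> ~ infinite_set A.
Proof.
  intros Hbound Hinf; apply Hinf.
  exists (list_prod (Z_range a) (Z_range b)).
  intros [m n] HA; destruct (Hbound m n HA).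
  apply in_prod; apply in_Z_range; assumption.
Qed.

Lemma not_excluded_ge2 (m n : Z) :
  NplusNminus (m, n) -> ~ excluded (m, n) -> 2 <= m /\ 2 <= n.
Proof. unfold NplusNminus, excluded; simpl; lia. Qed.

Section ClosedSet.

Variable S : Z * Z -> Prop.
Hypothesis S_closed : closed_set S.

Lemma closed_not_ll_of_not_mem (p q : Z * Z) :
  S p -> ~ S q -> NplusNminus q -> ~ ll q p.
Proof. intros Sp Sq Nq Hqp; exact (Sq (S_closed p Sp q (conj Nq Hqp))). Qed.

Lemma closed_bounded_above_row (m n b : Z) :
  S (m, n) -> ~ S (2, b) -> -1 <= b -> 2 <= m -> n < b.
Proof.
  intros Smn Sb Hb Hm.
  assert (Hll := closed_not_ll_of_not_mem (m, n) (2, b) Smn Sb).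
  unfold NplusNminus, ll in Hll; simpl in Hll; lia.
Qed.

Lemma closed_bounded_above_column (m n a : Z) :
  S (m, n) -> ~ S (a, 2) -> 1 <= a -> 2 <= n -> m < a.
Proof.
  intros Smn Sa Ha Hn.
  assert (Hll := closed_not_ll_of_not_mem (m, n) (a, 2) Smn Sa).
  unfold NplusNminus, ll in Hll; simpl in Hll; lia.
Qed.

End ClosedSet.

Theorem lemma3 (S : Z * Z -> Prop) :
  (forall p, S p -> NplusNminus p) ->
  closed_set S ->
  infinite_set (fun p => S p /\ ~ excluded p) ->
  (forall n : Z, -1 <= n -> S (2, n)) \/ (forall m : Z, 1 <= m -> S (m, 2)).
Proof.
  intros HN Hc Hinf.
  destruct (classic (forall n : Z, -1 <= n -> S (2, n))) as [Hrow | Hrow]; [now left |].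
  destruct (classic (forall m : Z, 1 <= m -> S (m, 2))) as [Hcol | Hcol]; [now right |].
  exfalso.
  apply not_all_ex_not in Hrow as [b Hb]; apply imply_to_and in Hb as [Hb Sb].
  apply not_all_ex_not in Hcol as [a Ha]; apply imply_to_and in Ha as [Ha Sa].
  refine (bounded_not_infinite _ a b _ Hinf).
  intros m n [Smn Hex].
  destruct (not_excluded_ge2 m n (HN _ Smn) Hex) as [Hm2 Hn2].
  pose proof (closed_bounded_above_row S Hc m n b Smn Sb Hb Hm2).
  pose proof (closed_bounded_above_column S Hc m n a Smn Sa Ha Hn2).
  lia.
Qed.
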